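(* Let $K$ be a field and $L$ a finite extension of $K$ of degree $n$. Let $(x_1,\dots,x_k)$ and $(y_1,\dots,y_\ell)$ be two $K$-linearly independent families of elements of $L$, and suppose $k+\ell\geqslant n+1$. Then the set $\{x_iy_j\ ;\ 1\leqslant i\leqslant k,\ 1\leqslant j\leqslant\ell\}$ spans $L$ as a $K$-vector space. *)

From HB Require Import structures.
From mathcomp Require Import all_boot all_order all_algebra all_field.
Set Implicit Arguments. Unset Strict Implicit. Unset Printing Implicit Defensive.

(* If the products span a proper subspace of L, some nonzero K-linear form
   phi vanishes on them.  Since L is a field, (a, b) |-> phi (a * b) is a
   nondegenerate pairing, so the span of the x_i, which pairs to zero with the
   span of the y_j, embeds into a complement of the latter: k <= n - l. *)

From HB Require Import structures.
From mathcomp Require Import all_boot all_order all_algebra all_field.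
Import GRing.Theory.
Local Open Scope ring_scope.

Lemma span_allpairs_mul {K : fieldType} {A : falgType K} (s t : seq A) :
  <<[seq (a * b)%R | a <- s, b <- t]>>%VS = (<<s>> * <<t>>)%VS.
Proof.
apply/eqP; rewrite eqEsubv; apply/andP; split.
  apply/span_subvP => _ /allpairsP[[a b] /= [sa tb ->]].
  by rewrite memv_mul ?memv_span.
apply/prodvP => u v.
move=> /(coord_span (X := in_tuple s)) -> /(coord_span (X := in_tuple t)) ->.
rewrite mulr_suml; apply: memv_suml => i _.
rewrite mulr_sumr; apply: memv_suml => j _.
rewrite -scalerAl -scalerAr !memvZ // memv_span //; apply/allpairsP.
by exists (s`_i, t`_j); rewrite !mem_nth ?size_tuple.
Qed.

Lemma vpick_compl_notin {K : fieldType} {vT : vectType K} {S : {vspace vT}} :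
  S != fullv -> (vpick S^C \notin S)%VS.
Proof.
move=> S_neq_full; apply: contra S_neq_full => Sc.
have /eqP Sc0 : (S^C == 0)%VS.
  by rewrite -vpick0 -memv0 -(capv_compl S) memv_cap Sc memv_pick.
by rewrite -(addv_complf S) Sc0 addv0.
Qed.

Lemma exists_scalar_notin {K : fieldType} {vT : vectType K}
    {S : {vspace vT}} {c : vT} :
  (c \notin S)%VS ->
  exists phi : {scalar vT}, {in S, forall v, phi v = 0%R} /\ phi c = 1%R.
Proof.
move=> notSc; pose e := [tuple of c :: vbasis S].
have free_e : free e.
  by rewrite free_cons (span_basis (vbasisP S)) notSc (basis_free (vbasisP S)).
exists (coord e ord0); split; last exact: (coord_free ord0 ord0 free_e).
move=> v /coord_vbasis ->; rewrite linear_sum big1 // => i _.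
by rewrite linearZ /= [(vbasis S)`_i](_ : _ = e`_(lift ord0 i)) // coord_free ?mulr0.
Qed.

Section ScalarPairing.

Variables (K : fieldType) (L : fieldExtType K) (phi : {scalar L}) (c : L).
Hypothesis phi_c_neq0 : phi c != 0%R.

Lemma scalar_mul_nondegenerate a : (forall b, phi (a * b) = 0%R) -> a = 0.
Proof.
move=> phi_a0; apply: contraNeq phi_c_neq0 => a_neq0.
by rewrite -[c](mulVKf a_neq0) phi_a0.
Qed.

Variable V : {vspace L}.

(* Embeds the annihilator of [V] for the pairing into [V^C]. *)
Definition compl_pairing (a : L) : L :=
  \sum_(i < \dim V^C%VS) phi (a * (vbasis V^C)%VS`_i) *: (vbasis V^C)%VS`_i.

Fact compl_pairing_is_linear : linear compl_pairing.
Proof.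
move=> k a b; rewrite /compl_pairing scaler_sumr -big_split.
apply: eq_bigr => i _ /=.
by rewrite mulrDl -scalerAl !linearP scalerDl scalerA.
Qed.

HB.instance Definition _ := GRing.isSemilinear.Build K L L _ compl_pairing
  (GRing.semilinear_linear compl_pairing_is_linear).

Lemma compl_pairing_inj a :
  {in V, forall b, phi (a * b) = 0%R} -> compl_pairing a = 0 -> a = 0.
Proof.
move=> phi_aV0 pair_a0; apply: scalar_mul_nondegenerate => b.
have /memv_addP[u Vu [w Vcw ->]] : (b \in V + V^C)%VS.
  by rewrite addv_complf memvf.
rewrite mulrDr linearD /= phi_aV0 // add0r.
rewrite (coord_vbasis Vcw) mulr_sumr linear_sum.
rewrite big1 // => i _; rewrite -scalerAr linearZ /=.
have := coord_sum_free (fun i => phi (a * (vbasis V^C)%VS`_i)) i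
  (basis_free (vbasisP V^C)).
by rewrite -/(compl_pairing a) pair_a0 linear0 => <-; rewrite mulr0.
Qed.

Lemma dimv_add_le_of_pairing_eq0 (U : {vspace L}) :
  {in U & V, forall a b, phi (a * b) = 0%R} -> (\dim U + \dim V <= \dim {:L})%N.
Proof.
move=> phi_UV0; pose T := linfun compl_pairing.
have injT : (U :&: lker T = 0)%VS.
  apply/eqP; rewrite -subv0; apply/subvP => a /memv_capP[Ua].
  rewrite memv_ker lfunE.
  by move=> /eqP /(compl_pairing_inj _ (phi_UV0 a ^~ Ua)) ->; rewrite memv0.
have sub_TU : (T @: U <= V^C)%VS.
  apply/subvP => _ /memv_imgP[a _ ->]; rewrite lfunE; apply: memv_suml => i _.
  by rewrite memvZ // vbasis_mem // mem_nth ?size_tuple.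
have : (\dim U <= \dim V^C)%N by rewrite -(limg_dim_eq injT) dimvS.
by rewrite dimv_compl leq_subRL ?dimvS ?subvf // addnC.
Qed.

End ScalarPairing.

Lemma prodv_full {K : fieldType} {L : fieldExtType K} (U V : {vspace L}) :
  (\dim {:L} < \dim U + \dim V)%N -> (U * V)%VS = fullv.
Proof.
apply: contraTeq => UV_neq_full; rewrite -leqNgt.
have [phi [phi_UV0 phi_c1]] :=
  exists_scalar_notin (vpick_compl_notin UV_neq_full).
apply: (@dimv_add_le_of_pairing_eq0 _ _ phi (vpick (U * V)^C)).
  by rewrite phi_c1 oner_eq0.
by move=> a b Ua Vb; rewrite phi_UV0 ?memv_mul.
Qed.

Local Open Scope vspace_scope.

Theorem mainTheorem3 (K : fieldType) (L : fieldExtType K) (n k l : nat)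
    (x : k.-tuple L) (y : l.-tuple L) :
  \dim {:L} = n ->
  free x -> free y ->
  (n.+1 <= k + l)%N ->
  <<[seq (xi * yj)%R | xi <- x, yj <- y]>>%VS = fullv.
Proof.
move=> dimL /eqnP dimx /eqnP dimy lt_n_kl.
by rewrite span_allpairs_mul prodv_full // dimx dimy !size_tuple dimL.
Qed.
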